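(* Let $B>0$. Consider the directed exponential network model with interaction effect on nodes $\{1,\dots,n\}$: for each pair $i<j\le n$ the pair $Y_{ij}=(a_{ij},a_{ji})\in\{0,1\}^2$ (where $a_{ij}=1$ indicates an edge from $i$ to $j$) is drawn, independently over pairs, from $$ g(a_{ij},a_{ji};\alpha_i,\beta_i,\alpha_j,\beta_j,\rho)=\frac{\exp\{(\alpha_i+\beta_j)a_{ij}+(\beta_i+\alpha_j)a_{ji}+\rho\, a_{ij}a_{ji}\}}{Z(\alpha_i,\beta_i,\alpha_j,\beta_j,\rho)}, $$ with $Z$ the normalizing constant, at true parameters $\alpha^*_i,\beta^*_i,\rho^*$, all lying in $[-B,B]$, with the identification normalization $\alpha^*_1=0$. Let $(\hat{\boldsymbol\alpha},\hat{\boldsymbol\beta},\hat\rho)$ be the maximum likelihood estimator, normalized by $\hat\alpha_1=0$. Set $\Delta\alpha=\frac1n\sum_{i\le n}(\hat\alpha_i-\alpha^*_i)$ and $\Delta\beta=\frac1n\sum_{i\le n}(\hat\beta_i-\beta^*_i)$. Then, as $n\to\infty$: (i) $(\hat\rho-\rho^* )^2=O_p(n^{-1/2}(\log n)^2)$; (ii) $(\Delta\alpha+\Delta\beta)^2=O_p(n^{-1/2}(\log n)^2)$; (iii) $\|\hat{\boldsymbol\alpha}-\boldsymbol\alpha^*-\Delta\alpha\|_2^2+\|\hat{\boldsymbol\beta}-\boldsymbol\beta^*-\Delta\beta\|_2^2=O_p(n^{1/2}(\log n)^2)$, where $\mathbf v-x$ denotes subtracting the scalar $x$ from every coordinate of $\mathbf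 v$.
   Context: The parameters $(\boldsymbol\alpha,\boldsymbol\beta,\rho)$ and $(\boldsymbol\alpha-x,\boldsymbol\beta+x,\rho)$ define the same model for every real $x$, which is why the normalization $\alpha_1=0$ is imposed. The maximum likelihood estimator maximizes $\sum_{i<j}\log g(a_{ij},a_{ji};\alpha_i,\beta_i,\alpha_j,\beta_j,\rho)$ over parameters in the (compact) parameter space with all coordinates in $[-B,B]$ and $\alpha_1=0$. $O_p$ denotes stochastic boundedness as $n\to\infty$. *)

From HB Require Import structures.
From mathcomp Require Import all_boot all_order all_algebra.
From mathcomp Require Import all_classical all_reals all_analysis.
Set Implicit Arguments. Unset Strict Implicit. Unset Printing Implicit Defensive.
Import Order.TTheory GRing.Theory Num.Theory.
Local Open Scope ring_scope.

(* A directed network on nodes 'I_n: a (i,j) = true iff edge i -> j.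
   Diagonal entries are forced to be absent (probability 0 otherwise). *)
Definition net (n : nat) := {ffun 'I_n * 'I_n -> bool}.

Definition b2R (R : realType) (b : bool) : R := (nat_of_bool b)%:R.

Section Model.
Variable R : realType.

Definition gnum (x y : bool) (ai bi aj bj rho : R) : R :=
  expR ((ai + bj) * b2R R x + (bi + aj) * b2R R y + rho * b2R R x * b2R R y).

Definition Zc (ai bi aj bj rho : R) : R :=
  \sum_(x : bool) \sum_(y : bool) gnum x y ai bi aj bj rho.

Definition g (x y : bool) (ai bi aj bj rho : R) : R :=
  gnum x y ai bi aj bj rho / Zc ai bi aj bj rho.

Definition netP (n : nat) (alpha beta : 'I_n -> R) (rho : R) (a : net n) : R :=
  (if [forall i, ~~ a (i, i)] then 1 else 0) *
  \prod_(i : 'I_n) \prod_(j : 'I_n | (i < j)%N)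
     g (a (i, j)) (a (j, i)) (alpha i) (beta i) (alpha j) (beta j) rho.

Definition loglik (n : nat) (alpha beta : 'I_n -> R) (rho : R) (a : net n) : R :=
  \sum_(i : 'I_n) \sum_(j : 'I_n | (i < j)%N)
     ln (g (a (i, j)) (a (j, i)) (alpha i) (beta i) (alpha j) (beta j) rho).

(* parameter space: all coordinates in [-B,B], alpha_1 = 0 (node index 0) *)
Definition in_param_space (B : R) (n : nat) (alpha beta : 'I_n -> R) (rho : R) : Prop :=
  (forall i, `|alpha i| <= B) /\ (forall i, `|beta i| <= B) /\ `|rho| <= B /\
  (forall i : 'I_n, nat_of_ord i = 0%N -> alpha i = 0).

Definition param (n : nat) := (('I_n -> R) * ('I_n -> R) * R)%type.

Definition is_mle (B : R) (n : nat) (a : net n) (th : param n) : Prop :=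
  in_param_space B th.1.1 th.1.2 th.2 /\
  forall (alpha beta : 'I_n -> R) (rho : R), in_param_space B alpha beta rho ->
    loglik alpha beta rho a <= loglik th.1.1 th.1.2 th.2 a.

Definition bigOp (Pn : forall n, net n -> R) (X : forall n, net n -> R)
  (r : nat -> R) : Prop :=
  forall eps : R, 0 < eps -> exists M : R, exists N : nat, forall n : nat,
    (N <= n)%N -> \sum_(a : net n | M * r n < `|X n a|) Pn n a < eps.

End Model.

(* Write u, v, w for the differences between the estimated and the true
   alpha, beta and rho.  On the dyad (i, j) the log-likelihood ratio of the
   estimate against the truth is affine in the sufficient statistics
   (a_ij, a_ji, a_ij a_ji), with slopes u_i + v_j, v_i + u_j and w.  Its mean is
   minus a Kullback-Leibler divergence, hence at most -c times the sum of the
   squared slopes, because all dyad probabilities are bounded below when the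
   parameters lie in [-B, B].  Its centered part sums to
   sum_i u_i S_i + sum_i v_i T_i + w R, where S_i, T_i are the centered out- and
   in-degrees and R the centered number of reciprocated dyads.  The estimate
   maximizes the likelihood, so the total ratio is nonnegative, and Young's
   inequality with weight sqrt n gives
     c sum_(i<j) [(u_i+v_j)^2 + (v_i+u_j)^2 + w^2]
       <= B (2n+1) sqrt n + B/sqrt n (sum_i S_i^2 + sum_i T_i^2 + R^2).
   The left-hand side is n times the squared deviations of u and v from their
   means, plus n^2 times the squared mean of u + v, plus (n^2-n)/2 w^2, minus a
   diagonal term O(n).  By independence of the dyads the bracket on the right
   has mean O(n^2), hence is O_p(n^2) by Markov's inequality; this yields the
   three rates, even without the factor (log n)^2. *)

From HB Require Import structures.
From mathcomp Require Import all_boot all_order all_algebra.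
From mathcomp Require Import all_classical all_reals all_analysis.
From mathcomp Require Import ring lra.
Set Implicit Arguments. Unset Strict Implicit. Unset Printing Implicit Defensive.
Import Order.TTheory GRing.Theory Num.Theory.
Local Open Scope ring_scope.

Section DyadLaw.
Variable R : realType.
Implicit Types (ai bi aj bj r : R) (x y : bool).

Lemma b2RT : b2R R true = 1. Proof. by []. Qed.
Lemma b2RF : b2R R false = 0. Proof. by []. Qed.

Lemma gnum_gt0 x y ai bi aj bj r : 0 < gnum x y ai bi aj bj r.
Proof. exact: expR_gt0. Qed.

Lemma Zc_gt0 ai bi aj bj r : 0 < Zc ai bi aj bj r.
Proof. by rewrite /Zc !big_bool !addr_gt0 ?gnum_gt0. Qed.

Lemma g_gt0 x y ai bi aj bj r : 0 < g x y ai bi aj bj r.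
Proof. by rewrite divr_gt0 ?gnum_gt0 ?Zc_gt0. Qed.

Lemma sum_g ai bi aj bj r : \sum_x \sum_y g x y ai bi aj bj r = 1.
Proof.
rewrite /g; under eq_bigr do rewrite -mulr_suml.
by rewrite -mulr_suml divff // gt_eqF ?Zc_gt0.
Qed.

Lemma ln_g x y ai bi aj bj r : ln (g x y ai bi aj bj r) =
  (ai + bj) * b2R R x + (bi + aj) * b2R R y + r * b2R R x * b2R R y
  - ln (Zc ai bi aj bj r).
Proof. by rewrite ln_div ?posrE ?gnum_gt0 ?Zc_gt0 // expRK. Qed.

(* Every exponent of [gnum] lies in [[-5B, 5B]], so each of the four weights
   lies in [[e^(-5B), e^(5B)]] and [Zc <= 4 e^(5B)]. *)
Definition g_min (B : R) : R := expR (- (5 * B)) / (4 * expR (5 * B)).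

Lemma g_min_gt0 (B : R) : 0 < g_min B.
Proof. by rewrite divr_gt0 ?mulr_gt0 ?expR_gt0. Qed.

Section Bounded.
Variables (B ai bi aj bj r : R).
Hypotheses (hai : `|ai| <= B) (hbi : `|bi| <= B) (haj : `|aj| <= B)
  (hbj : `|bj| <= B) (hr : `|r| <= B).

Lemma gnum_bounds x y :
  expR (- (5 * B)) <= gnum x y ai bi aj bj r <= expR (5 * B).
Proof.
move: hai hbi haj hbj hr => /ler_normlP[? ?] /ler_normlP[? ?] /ler_normlP[? ?]
  /ler_normlP[? ?] /ler_normlP[? ?].
by rewrite !ler_expR; case: x; case: y; rewrite ?b2RT ?b2RF; apply/andP; split; lra.
Qed.

Lemma Zc_le : Zc ai bi aj bj r <= 4 * expR (5 * B).
Proof.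
rewrite /Zc !big_bool /=.
have := gnum_bounds true true; have := gnum_bounds true false.
have := gnum_bounds false true; have := gnum_bounds false false.
move=> /andP[_ ?] /andP[_ ?] /andP[_ ?] /andP[_ ?]; lra.
Qed.

Lemma g_ge_min x y : g_min B <= g x y ai bi aj bj r.
Proof.
have /andP[lb _] := gnum_bounds x y.
rewrite ler_pdivlMr ?Zc_gt0 //; apply: le_trans lb.
rewrite -[X in _ <= X](divfK (_ : 4 * expR (5 * B) != 0)) ?gt_eqF ?mulr_gt0 ?expR_gt0 //.
by rewrite ler_pM2l ?g_min_gt0 ?Zc_le.
Qed.

End Bounded.
End DyadLaw.

Section LogInequalities.
Variable R : realType.
Implicit Types (c p q : R).

Lemma ln_le_subr1 (x : R) : 0 < x -> ln x <= x - 1.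
Proof. by move=> x0; have := expR_ge1Dx (ln x); rewrite lnK ?posrE //; lra. Qed.

Lemma mul_lnB_le p q : 0 < p -> 0 < q -> p * (ln q - ln p) <= q - p.
Proof.
move=> p0 q0; have := ln_le_subr1 (divr_gt0 q0 p0).
rewrite ln_div ?posrE // -(ler_pM2l p0) => /le_trans; apply.
by rewrite mulrBr mulrCA divff ?mulr1 ?gt_eqF.
Qed.

Lemma sqr_lnB_le c p q : 0 < c -> c <= p -> c <= q ->
  c ^+ 2 * (ln q - ln p) ^+ 2 <= (q - p) ^+ 2.
Proof.
move=> c0; wlog pq : p q / p <= q => [hwlog cp cq|cp cq].
  have [pq|/ltW qp] := lerP p q; first exact: hwlog.
  have sqrB_sym (u v : R) : (u - v) ^+ 2 = (v - u) ^+ 2 by rewrite -sqrrN opprB.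
  by rewrite sqrB_sym [(q - p) ^+ 2]sqrB_sym hwlog.
have p0 : 0 < p := lt_le_trans c0 cp.
have d0 : 0 <= ln q - ln p by rewrite subr_ge0 ler_ln ?posrE // (lt_le_trans p0).
have cd : c * (ln q - ln p) <= q - p.
  exact: le_trans (ler_wpM2r d0 cp) (mul_lnB_le p0 (lt_le_trans p0 pq)).
have cd0 : 0 <= c * (ln q - ln p) by apply: mulr_ge0 => //; apply: ltW.
by rewrite -exprMn ler_sqr ?nnegrE // (le_trans cd0).
Qed.

(* The square roots turn the bound into [(q - p) ^+ 2 / 4 <= (sqrt q - sqrt p) ^+ 2],
   i.e. [(sqrt q + sqrt p) ^+ 2 <= 4]. *)
Lemma kl_term_le p q : 0 < p -> p <= 1 -> 0 < q -> q <= 1 ->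
  p * (ln q - ln p) <= (q - p) - (q - p) ^+ 2 / 4.
Proof.
move=> p0 p1 q0 q1.
set s := Num.sqrt p; set t := Num.sqrt q.
have s0 : 0 < s by rewrite sqrtr_gt0.
have t0 : 0 < t by rewrite sqrtr_gt0.
have <- : s ^+ 2 = p by rewrite sqr_sqrtr // ltW.
have <- : t ^+ 2 = q by rewrite sqr_sqrtr // ltW.
have s1 : s <= 1 by rewrite -sqrtr1 ler_sqrt.
have t1 : t <= 1 by rewrite -sqrtr1 ler_sqrt.
have -> : s ^+ 2 * (ln (t ^+ 2) - ln (s ^+ 2)) = 2 * s * (s * (ln t - ln s)).
  by rewrite !lnXn //; ring.
have h1 : 2 * s * (s * (ln t - ln s)) <= 2 * s * (t - s).
  by rewrite ler_pM2l ?mulr_gt0 ?mul_lnB_le.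
have h2 : (t ^+ 2 - s ^+ 2) ^+ 2 / 4 <= (t - s) ^+ 2.
  have -> : (t ^+ 2 - s ^+ 2) ^+ 2 / 4 = (t - s) ^+ 2 * ((t + s) ^+ 2 / 4) by ring.
  rewrite ler_piMr ?sqr_ge0 // ler_pdivrMr // mul1r.
  have -> : 4 = 2 ^+ 2 :> R by rewrite expr2; lra.
  by rewrite ler_sqr ?nnegrE; lra.
have -> : t ^+ 2 - s ^+ 2 = 2 * s * (t - s) + (t - s) ^+ 2 by ring.
lra.
Qed.

Lemma expect_ln_ratio_le (I : finType) (c : R) (pr qr : I -> R) :
  0 < c -> (forall i, c <= pr i) -> (forall i, c <= qr i) ->
  \sum_i pr i = 1 -> \sum_i qr i = 1 ->
  \sum_i pr i * (ln (qr i) - ln (pr i))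
    <= - (c ^+ 2 / 4) * \sum_i (ln (qr i) - ln (pr i)) ^+ 2.
Proof.
move=> c0 cp cq sp sq.
have le1 (f : I -> R) i : (forall j, c <= f j) -> \sum_j f j = 1 -> f i <= 1.
  move=> cf <-; rewrite (bigD1 i) //= lerDl.
  by apply: sumr_ge0 => j _; apply: le_trans (cf j); apply: ltW.
have pos (f : I -> R) i : (forall j, c <= f j) -> 0 < f i.
  by move=> cf; apply: lt_le_trans (cf i).
apply: le_trans (ler_sum _ (fun i _ => kl_term_le (pos _ i cp) (le1 _ i cp sp)
  (pos _ i cq) (le1 _ i cq sq))) _.
rewrite sumrB sumrB sp sq subrr sub0r mulNr lerN2 mulr_sumr.
apply: ler_sum => i _; rewrite mulrAC ler_pM2r ?invr_gt0 //.
exact: sqr_lnB_le.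
Qed.

End LogInequalities.

Definition dyad_mean (R : realType) (ai bi aj bj r : R) (f : bool -> bool -> R) : R :=
  \sum_x \sum_y g x y ai bi aj bj r * f x y.

Lemma interaction_sqr_le (R : realType) (h : bool -> bool -> R) :
  (h true false - h false false) ^+ 2 + (h false true - h false false) ^+ 2
  + (h true true - h true false - h false true + h false false) ^+ 2
  <= 8 * \sum_x \sum_y h x y ^+ 2.
Proof.
rewrite !big_bool /=.
set a := h true true; set b := h true false; set c := h false true; set d := h false false.
have sqrD2 (u v : R) : (u - v) ^+ 2 <= 2 * u ^+ 2 + 2 * v ^+ 2.
  by rewrite -subr_ge0 (_ : _ - _ = (u + v) ^+ 2) ?sqr_ge0 //; ring.
have sqrD4 : (a - b - c + d) ^+ 2 <= 4 * (a ^+ 2 + b ^+ 2 + c ^+ 2 + d ^+ 2).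
  rewrite -subr_ge0 (_ : _ - _ = (a + b) ^+ 2 + (a + c) ^+ 2 + (a - d) ^+ 2
    + (b - c) ^+ 2 + (b + d) ^+ 2 + (c + d) ^+ 2); first by rewrite !addr_ge0 ?sqr_ge0.
  by ring.
have := sqrD2 b d; have := sqrD2 c d.
have := sqr_ge0 a; have := sqr_ge0 b; have := sqr_ge0 c; lra.
Qed.

Section DyadPair.
Variables (R : realType) (ai bi aj bj r ai' bi' aj' bj' r' : R).

Let p x y := g x y ai bi aj bj r.
Definition llr x y := ln (g x y ai' bi' aj' bj' r') - ln (p x y).
Definition llr_U := ai' - ai + (bj' - bj).
Definition llr_V := bi' - bi + (aj' - aj).
Definition llr_W := r' - r.

Lemma llr_coef :
  [/\ llr_U = llr true false - llr false false,
      llr_V = llr false true - llr false false &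
      llr_W = llr true true - llr true false - llr false true + llr false false].
Proof. by rewrite /llr /p !ln_g !b2RT !b2RF /llr_U /llr_V /llr_W; split; ring. Qed.

Lemma llr_centered x y :
  llr x y - dyad_mean ai bi aj bj r llr =
    llr_U * (b2R R x - dyad_mean ai bi aj bj r (fun x _ => b2R R x))
  + llr_V * (b2R R y - dyad_mean ai bi aj bj r (fun _ y => b2R R y))
  + llr_W * (b2R R x * b2R R y - dyad_mean ai bi aj bj r (fun x y => b2R R x * b2R R y)).
Proof.
have := sum_g ai bi aj bj r; rewrite !big_bool /= => hs.
rewrite /dyad_mean !big_bool /= /llr /p !ln_g !b2RT !b2RF /llr_U /llr_V /llr_W.
have -> : g false false ai bi aj bj r = 1 - g true true ai bi aj bj r
  - g true false ai bi aj bj r - g false true ai bi aj bj r by lra.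
by case: x; case: y; rewrite ?b2RT ?b2RF; ring.
Qed.

(* [- dyad_mean llr] is a Kullback-Leibler divergence; [llr_coef] expresses the
   natural-parameter differences through [llr], so [expect_ln_ratio_le] applies. *)
Lemma dyad_mean_llr_le (c : R) : 0 < c ->
  (forall x y, c <= g x y ai bi aj bj r) -> (forall x y, c <= g x y ai' bi' aj' bj' r') ->
  dyad_mean ai bi aj bj r llr <= - (c ^+ 2 / 32) * (llr_U ^+ 2 + llr_V ^+ 2 + llr_W ^+ 2).
Proof.
move=> c0 cp cq.
have pairE (F : bool -> bool -> R) : \sum_x \sum_y F x y = \sum_(z : bool * bool) F z.1 z.2.
  exact: pair_bigA.
have sum1 (ai0 bi0 aj0 bj0 r0 : R) : \sum_(z : bool * bool) g z.1 z.2 ai0 bi0 aj0 bj0 r0 = 1.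
  by rewrite -(pairE (fun x y => g x y ai0 bi0 aj0 bj0 r0)) sum_g.
apply: le_trans (_ : _ <= - (c ^+ 2 / 4) * \sum_x \sum_y llr x y ^+ 2) _.
  rewrite /dyad_mean /llr (pairE (fun x y => p x y * _)) (pairE (fun x y => (_ - _) ^+ 2)).
  exact: expect_ln_ratio_le c0 (fun z => cp z.1 z.2) (fun z => cq z.1 z.2)
    (sum1 _ _ _ _ _) (sum1 _ _ _ _ _).
have [-> -> ->] := llr_coef.
rewrite !mulNr lerN2 (_ : c ^+ 2 / 4 = c ^+ 2 / 32 * 8); last by field.
rewrite -[_ * 8 * _]mulrA ler_pM2l ?interaction_sqr_le //.
by rewrite divr_gt0 ?exprn_gt0.
Qed.

End DyadPair.

Section Dyads.
Variable n : nat.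
Local Notation pairs := ('I_n * 'I_n)%type.

Definition upper (m : pairs) : bool := (m.1 < m.2)%N.
Definition mirror (m : pairs) : pairs := (m.2, m.1).
Definition loopless (a : net n) : bool := [forall i, ~~ a (i, i)].

Lemma mirrorK : involutive mirror. Proof. by case. Qed.

Lemma upper_mirror m : upper m -> upper (mirror m) = false.
Proof. by case: m => i j; rewrite /upper /= => /ltnW; rewrite ltnNge => ->. Qed.

Lemma upper_diag m : m.1 = m.2 -> upper m = false.
Proof. by case: m => i j /= ->; rewrite /upper ltnn. Qed.

Lemma not_upper_mirror m : ~~ upper m -> m.1 != m.2 -> upper (mirror m).
Proof.
case: m => i j; rewrite /upper /= -leqNgt leq_eqVlt => /orP[/eqP/val_inj -> /eqP //|-> //].
Qed.

(* A network is encoded by the values [(a m, a (mirror m))] on upper pairs;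
   on the other pairs the code is [(false, false)], except for the loop bit. *)
Definition to_dyads (a : net n) : {ffun pairs -> bool * bool} :=
  [ffun m => if upper m then (a m, a (mirror m))
             else if m.1 == m.2 then (a m, false) else (false, false)].

Definition of_dyads (b : {ffun pairs -> bool * bool}) : net n :=
  [ffun m => if upper m then (b m).1
             else if upper (mirror m) then (b (mirror m)).2 else (b m).1].

Lemma to_dyadsK : cancel to_dyads of_dyads.
Proof.
move=> a; apply/ffunP => m; rewrite !ffunE.
case: ifP => [->|um] //; case: ifP => [usm|usm]; first by rewrite usm mirrorK.
rewrite um; case: eqP => // /eqP d; move/negbT: usm; rewrite not_upper_mirror //.
exact/negbT.
Qed.

Variables (R : realType) (G : pairs -> bool -> bool -> R).

Definition dyad_weight (m : pairs) (z : bool * bool) : R :=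
  if upper m then G m z.1 z.2 else (z == (false, false))%:R.

Lemma prod_dyad_weight a : \prod_m dyad_weight m (to_dyads a m) =
  (loopless a)%:R * \prod_(m | upper m) G m (a m) (a (mirror m)).
Proof.
rewrite (bigID upper) /= [RHS]mulrC; congr (_ * _).
  by apply: eq_bigr => m um; rewrite /dyad_weight ffunE um.
rewrite /loopless; case: forallP => [noloop|/forallP/forallPn[i]]; last first.
  rewrite negbK => aii; rewrite (bigD1 (i, i)) ?upper_diag //=.
  by rewrite /dyad_weight ffunE upper_diag //= eqxx aii mul0r.
apply: big1 => m /negbTE um; rewrite /dyad_weight ffunE um.
case: (m.1 =P m.2) => [|_]; last by rewrite eqxx.
by case: m {um} => i j /= <-; rewrite (negbTE (noloop i)) eqxx.
Qed.

Lemma to_of_dyads (b : {ffun pairs -> bool * bool}) :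
  \prod_m dyad_weight m (b m) != 0 -> to_dyads (of_dyads b) = b.
Proof.
move=> /prodf_neq0 w; apply/ffunP => m; rewrite !ffunE.
have := w m isT; rewrite /dyad_weight.
case: ifP => um wm; first by rewrite upper_mirror // mirrorK um; case: (b m).
have bm : b m = (false, false) by apply/eqP; apply: contraNT wm => /negbTE ->.
rewrite bm; case: (m.1 =P m.2) => // d.
by rewrite (@upper_diag (mirror m) (esym d)).
Qed.

(* Codes outside the range of [to_dyads] have null weight, so the sum over
   networks is the sum over all codes, which factorizes. *)
Lemma sum_loopless_prod_upper :
  \sum_(a : net n) (loopless a)%:R * \prod_(m | upper m) G m (a m) (a (mirror m)) =
  \prod_(m | upper m) \sum_x \sum_y G m x y.
Proof.
under [LHS]eq_bigr do rewrite -prod_dyad_weight.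
have -> : \sum_(a : net n) \prod_m dyad_weight m (to_dyads a m) =
          \sum_(b : {ffun pairs -> bool * bool}) \prod_m dyad_weight m (b m).
  rewrite [RHS](bigID (fun b => to_dyads (of_dyads b) == b)) /=.
  rewrite [X in _ + X]big1 ?addr0; last first.
    by move=> b /eqP nb; apply/eqP; apply: contraT => /to_of_dyads.
  rewrite (reindex_onto to_dyads of_dyads) => [|b /eqP //].
  by apply: eq_bigl => a; rewrite to_dyadsK !eqxx.
rewrite -bigA_distr_bigA /= (bigID upper) /= [X in _ * X]big1 ?mulr1 => [|m um].
  apply: eq_bigr => m um; rewrite -(pair_bigA _ (fun x y => dyad_weight m (x, y))).
  by rewrite /dyad_weight um.
rewrite -(pair_bigA _ (fun x y => dyad_weight m (x, y))) /dyad_weight (negbTE um).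
by rewrite !big_bool /= !add0r.
Qed.

End Dyads.

Lemma sum_delta (R : realType) (I : finType) (k : I) (F : I -> R) :
  \sum_i (k == i)%:R * F i = F k.
Proof.
rewrite (bigD1 k) //= eqxx mul1r big1 ?addr0 // => i ik.
by rewrite eq_sym (negbTE ik) mul0r.
Qed.

Lemma sum_upper_const (R : realType) n (c : R) : 0 <= c ->
  \sum_(m : 'I_n * 'I_n | upper m) c <= n%:R ^+ 2 * c.
Proof.
move=> c0; apply: le_trans (_ : _ <= \sum_(m : 'I_n * 'I_n) c) _.
  by rewrite [leRHS](bigID (@upper n)) /= lerDl sumr_ge0.
by rewrite sumr_const card_prod card_ord -[c *+ _]mulr_natl natrM expr2.
Qed.

Definition fst_bit (R : realType) : bool -> bool -> R := fun x _ => b2R R x.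
Definition snd_bit (R : realType) : bool -> bool -> R := fun _ y => b2R R y.
Definition both_bits (R : realType) : bool -> bool -> R := fun x y => b2R R x * b2R R y.

Section NetworkLaw.
Variables (R : realType) (n : nat) (al be : 'I_n -> R) (rh : R).
Local Notation pairs := ('I_n * 'I_n)%type.
Local Notation P := (netP al be rh).
Implicit Types (m : pairs) (f h : bool -> bool -> R).

Definition pdyad (m : pairs) x y := g x y (al m.1) (be m.1) (al m.2) (be m.2) rh.
Definition mean (m : pairs) := dyad_mean (al m.1) (be m.1) (al m.2) (be m.2) rh.

Lemma mean1 m : mean m (fun _ _ => 1) = 1.
Proof.
rewrite /mean /dyad_mean; under eq_bigr do under eq_bigr do rewrite mulr1.
exact: sum_g.
Qed.

Lemma netP_prod_upper a :
  P a = (loopless a)%:R * \prod_(m | upper m) pdyad m (a m) (a (mirror m)).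
Proof.
rewrite /netP /loopless pair_big_dep /=; congr (_ * _); first by case: ifP.
by apply: eq_big => -[i j].
Qed.

Lemma netP_ge0 a : 0 <= P a.
Proof. by rewrite netP_prod_upper mulr_ge0 ?prodr_ge0 // => m _; apply/ltW/g_gt0. Qed.

Lemma expect_prod_upper (F : pairs -> bool -> bool -> R) :
  \sum_a P a * \prod_(m | upper m) F m (a m) (a (mirror m)) =
  \prod_(m | upper m) mean m (F m).
Proof.
rewrite -(sum_loopless_prod_upper (fun m x y => pdyad m x y * F m x y)).
by apply: eq_bigr => a _; rewrite netP_prod_upper -mulrA -big_split.
Qed.

Lemma expect_prod_on (S : pred pairs) (F : pairs -> bool -> bool -> R) :
  (forall m, S m -> upper m) ->
  \sum_a P a * \prod_(m | S m) F m (a m) (a (mirror m)) = \prod_(m | S m) mean m (F m).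
Proof.
move=> sS; pose F' m := if S m then F m else fun _ _ => 1.
have restrict (H : pairs -> R) : (forall m, ~~ S m -> H m = 1) ->
    \prod_(m | upper m) H m = \prod_(m | S m) H m.
  move=> H1; rewrite (bigID S) /= [X in _ * X]big1 ?mulr1 => [|m /andP[_ /H1] //].
  by apply: eq_bigl => m; apply/andb_idl/sS.
transitivity (\sum_(a : net n) P a * \prod_(m | upper m) F' m (a m) (a (mirror m))).
  apply: eq_bigr => a _; rewrite restrict => [|m /negbTE Sm]; last by rewrite /F' Sm.
  by congr (_ * _); apply: eq_bigr => m Sm; rewrite /F' Sm.
rewrite expect_prod_upper restrict => [|m /negbTE Sm]; last by rewrite /F' Sm mean1.
by apply: eq_bigr => m Sm; rewrite /F' Sm.
Qed.

Lemma expect_dyad m f : upper m ->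
  \sum_a P a * f (a m) (a (mirror m)) = mean m f.
Proof.
move=> um; have sS k : pred1 m k -> upper k by move/eqP ->.
have := @expect_prod_on (pred1 m) (fun _ => f) sS.
by rewrite (big_pred1 m) //; under eq_bigr do rewrite (big_pred1 m) //.
Qed.

Lemma expect_two_dyads m m' f f' : upper m -> upper m' -> m != m' ->
  \sum_a P a * (f (a m) (a (mirror m)) * f' (a m') (a (mirror m'))) = mean m f * mean m' f'.
Proof.
move=> um um' mm'.
pose S := [pred k | (k == m) || (k == m')].
have sS : forall k, S k -> upper k by move=> k /orP[] /eqP ->.
pose F k := if k == m then f else f'.
have two (H : pairs -> R) : \prod_(k | S k) H k = H m * H m'.
  rewrite (bigD1 m) /=; last by rewrite eqxx.
  rewrite (bigD1 m') /=; last by rewrite eqxx orbT eq_sym.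
  rewrite big1 ?mulr1 // => k /andP[/andP[]].
  by case/orP => /eqP ->; rewrite eqxx ?andbF.
have := expect_prod_on F sS; rewrite two /F eqxx eq_sym (negbTE mm') => <-.
by apply: eq_bigr => a _; rewrite two eqxx eq_sym (negbTE mm').
Qed.

Lemma expect_sqr_sum_centered (Z : pairs -> bool -> bool -> R) :
  (forall m, upper m -> mean m (Z m) = 0) ->
  \sum_a P a * (\sum_(m | upper m) Z m (a m) (a (mirror m))) ^+ 2 =
  \sum_(m | upper m) mean m (fun x y => Z m x y ^+ 2).
Proof.
move=> Z0.
under eq_bigr do rewrite expr2 mulr_suml mulr_sumr; rewrite exchange_big /=.
apply: eq_bigr => m um; rewrite -expect_dyad //.
under eq_bigr do rewrite !mulr_sumr; rewrite exchange_big /= (bigD1 m) //=.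
rewrite [X in _ + X]big1 ?addr0 => [|m' /andP[um' mm']].
  by apply: eq_bigr => a _; rewrite expr2.
by rewrite expect_two_dyads 1?eq_sym // Z0 // mul0r.
Qed.

Definition centered m f x y := f x y - mean m f.

(* [node_dev fst_bit snd_bit a i] and [node_dev snd_bit fst_bit a i] are the
   out- and in-degree of node [i] minus their means, [recip_dev a] is the
   centered number of reciprocated dyads. *)
Definition node_dev f h (a : net n) (i : 'I_n) : R :=
  \sum_(m | upper m) ((m.1 == i)%:R * centered m f (a m) (a (mirror m))
                    + (m.2 == i)%:R * centered m h (a m) (a (mirror m))).
Definition recip_dev (a : net n) : R :=
  \sum_(m | upper m) centered m (both_bits R) (a m) (a (mirror m)).
Definition dev_sqnorm (a : net n) : R :=
  \sum_i node_dev (fst_bit R) (snd_bit R) a i ^+ 2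
  + \sum_i node_dev (snd_bit R) (fst_bit R) a i ^+ 2 + recip_dev a ^+ 2.

Lemma dev_sqnorm_ge0 a : 0 <= dev_sqnorm a.
Proof. by rewrite !addr_ge0 ?sqr_ge0 ?sumr_ge0 // => i _; rewrite sqr_ge0. Qed.

Lemma mean_lin m c1 c2 f h :
  mean m (fun x y => c1 * f x y + c2 * h x y) = c1 * mean m f + c2 * mean m h.
Proof. by rewrite /mean /dyad_mean !big_bool /=; ring. Qed.

Lemma mean_centered m f : mean m (centered m f) = 0.
Proof.
have -> : centered m f = (fun x y => 1 * f x y + - mean m f * 1).
  by apply/funext => x; apply/funext => y; rewrite /centered mul1r mulr1.
by rewrite mean_lin mean1 mul1r mulr1 subrr.
Qed.

Lemma mean_le m f c : (forall x y, f x y <= c) -> mean m f <= c.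
Proof.
move=> fc; apply: le_trans (_ : _ <= \sum_x \sum_y pdyad m x y * c) _.
  apply: ler_sum => x _; apply: ler_sum => y _.
  by apply: ler_wpM2l (fc x y); apply/ltW/g_gt0.
by under eq_bigr do rewrite -mulr_suml; rewrite -mulr_suml sum_g mul1r.
Qed.

Lemma mean_ge0 m f : (forall x y, 0 <= f x y) -> 0 <= mean m f.
Proof.
move=> f0; apply: sumr_ge0 => x _; apply: sumr_ge0 => y _.
by apply: mulr_ge0 (f0 x y); apply/ltW/g_gt0.
Qed.

Lemma centered_sqr_le1 m f x y : (forall x y, 0 <= f x y <= 1) ->
  centered m f x y ^+ 2 <= 1.
Proof.
move=> f01; have /andP[f0 f1] := f01 x y.
have m0 : 0 <= mean m f by apply: mean_ge0 => x' y'; case/andP: (f01 x' y').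
have m1 : mean m f <= 1 by apply: mean_le => x' y'; case/andP: (f01 x' y').
rewrite /centered; nra.
Qed.

Lemma expect_node_dev_sqr f h :
  (forall x y, 0 <= f x y <= 1) -> (forall x y, 0 <= h x y <= 1) ->
  \sum_i \sum_a P a * node_dev f h a i ^+ 2 <= 4 * n%:R ^+ 2.
Proof.
move=> f01 h01.
pose Z i m x y := (m.1 == i)%:R * centered m f x y + (m.2 == i)%:R * centered m h x y.
have Z_bound i m x y : Z i m x y ^+ 2 <= 2 * (m.1 == i)%:R + 2 * (m.2 == i)%:R.
  have := centered_sqr_le1 m x y f01; have := centered_sqr_le1 m x y h01.
  by rewrite /Z; case: (m.1 == i); case: (m.2 == i) => /=; nra.
have one (k : 'I_n) : \sum_i (k == i)%:R = 1 :> R.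
  by under eq_bigr do rewrite -[_%:R]mulr1; rewrite sum_delta.
apply: le_trans (_ : _ <= \sum_i \sum_(m | upper m)
    (2 * (m.1 == i)%:R + 2 * (m.2 == i)%:R)) _.
  apply: ler_sum => i _; rewrite (@expect_sqr_sum_centered (Z i)) => [|m _].
    by apply: ler_sum => m _; apply: mean_le.
  by rewrite mean_lin !mean_centered !mulr0 addr0.
rewrite exchange_big /= mulrC; apply: le_trans (sum_upper_const n (ler0n _ 4)).
rewrite le_eqVlt; apply/orP; left; apply/eqP/eq_bigr => m _.
by rewrite big_split /= -!mulr_sumr !one; lra.
Qed.

Lemma expect_recip_dev_sqr : \sum_a P a * recip_dev a ^+ 2 <= n%:R ^+ 2.
Proof.
have both01 x y : 0 <= both_bits R x y <= 1.
  by case: x; case: y; rewrite /both_bits ?b2RT ?b2RF ?mulr1 ?mulr0 ler01 lexx.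
rewrite (@expect_sqr_sum_centered (fun m => centered m (both_bits R))) => [|m _].
  apply: le_trans (ler_sum _ (fun m _ =>
    mean_le m (fun x y => centered_sqr_le1 m x y both01))) _.
  by rewrite -[leRHS]mulr1 sum_upper_const.
exact: mean_centered.
Qed.

Lemma expect_dev_sqnorm : \sum_a P a * dev_sqnorm a <= 9 * n%:R ^+ 2.
Proof.
have fst01 x y : 0 <= fst_bit R x y <= 1 by case: x; rewrite /fst_bit ?b2RT ?b2RF ler01 lexx.
have snd01 x y : 0 <= snd_bit R x y <= 1 by case: y; rewrite /snd_bit ?b2RT ?b2RF ler01 lexx.
under eq_bigr do rewrite /dev_sqnorm !mulrDr !mulr_sumr.
rewrite !big_split /= exchange_big /= [X in _ + X + _]exchange_big /=.
have := expect_node_dev_sqr fst01 snd01; have := expect_node_dev_sqr snd01 fst01.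
have := expect_recip_dev_sqr; lra.
Qed.

End NetworkLaw.

Definition avg (R : realType) n (u : 'I_n -> R) : R := n%:R^-1 * \sum_i u i.

Section SumIdentities.
Variables (R : realType) (n : nat).
Implicit Types (u v : 'I_n -> R).

Lemma sum_node_regroup (w : 'I_n -> R) (A B : 'I_n * 'I_n -> R) :
  \sum_i w i * \sum_(m | upper m) ((m.1 == i)%:R * A m + (m.2 == i)%:R * B m) =
  \sum_(m | upper m) (w m.1 * A m + w m.2 * B m).
Proof.
under eq_bigr do rewrite mulr_sumr; rewrite exchange_big /=; apply: eq_bigr => m _.
under eq_bigr do rewrite mulrDr; rewrite big_split /=.
congr (_ + _); [rewrite -(sum_delta m.1 (fun i => w i * A m))
  | rewrite -(sum_delta m.2 (fun i => w i * B m))];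
  by apply: eq_bigr => i _; rewrite mulrCA.
Qed.

Lemma sum_pairs_upper (F : 'I_n * 'I_n -> R) :
  \sum_m F m = \sum_(m | upper m) F m + \sum_(m | upper m) F (mirror m) + \sum_i F (i, i).
Proof.
rewrite (bigID (@upper n)) /= -addrA; congr (_ + _).
rewrite (bigID (fun m : 'I_n * 'I_n => m.1 == m.2)) /= addrC; congr (_ + _).
  rewrite (reindex_inj (can_inj (@mirrorK n))) /=; apply: eq_bigl => -[i j] /=.
  by rewrite /upper /= -leqNgt ltn_neqAle andbC eq_sym.
rewrite [RHS](eq_bigr (fun i => \sum_(j | j == i) F (i, j))) => [|i _]; last first.
  by rewrite big_pred1_eq.
rewrite pair_big_dep /=; apply: eq_big => [[i j]|[i j] _] //=.
by rewrite /upper /= eq_sym; case: eqP => [->|]; rewrite ?ltnn ?andbF.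
Qed.

Lemma sum_quadratic (a b c : R) u :
  \sum_i (a + b * u i + c * u i ^+ 2) = n%:R * a + b * \sum_i u i + c * \sum_i u i ^+ 2.
Proof. by rewrite !big_split /= -!mulr_sumr sumr_const card_ord mulr_natl. Qed.

Lemma sum_sqr_add u v : (0 < n)%N ->
  \sum_i \sum_j (u i + v j) ^+ 2 =
  n%:R * \sum_i (u i - avg u) ^+ 2 + n%:R * \sum_j (v j - avg v) ^+ 2
  + n%:R ^+ 2 * (avg u + avg v) ^+ 2.
Proof.
move=> n0; have n_neq0 : n%:R != 0 :> R by rewrite pnatr_eq0 -lt0n.
have sum_sqrB (w : 'I_n -> R) (c : R) : \sum_i (w i - c) ^+ 2 =
    n%:R * c ^+ 2 + (- 2 * c) * \sum_i w i + 1 * \sum_i w i ^+ 2.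
  by rewrite -sum_quadratic; apply: eq_bigr => i _; ring.
have -> : \sum_i \sum_j (u i + v j) ^+ 2 =
    \sum_i (\sum_j v j ^+ 2 + (2 * \sum_j v j) * u i + n%:R * u i ^+ 2).
  apply: eq_bigr => i _.
  rewrite (eq_bigr (fun j => u i ^+ 2 + (2 * u i) * v j + 1 * v j ^+ 2)) => [|j _].
    by rewrite sum_quadratic; ring.
  by ring.
rewrite sum_quadratic !sum_sqrB /avg.
by field.
Qed.

Lemma sum_upper_pair_sqr u v (w : R) :
  \sum_(m | upper m) ((u m.1 + v m.2) ^+ 2 + (v m.1 + u m.2) ^+ 2 + w ^+ 2) =
  \sum_i \sum_j (u i + v j) ^+ 2 - \sum_i (u i + v i) ^+ 2 + (n%:R ^+ 2 - n%:R) / 2 * w ^+ 2.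
Proof.
have e1 := sum_pairs_upper (fun m => (u m.1 + v m.2) ^+ 2).
rewrite /= -(pair_bigA _ (fun i j => (u i + v j) ^+ 2)) in e1.
rewrite !big_split /= e1.
have e2 := sum_pairs_upper (fun _ => w ^+ 2); move: e2.
set S := \sum_(m | upper m) w ^+ 2.
rewrite !sumr_const card_prod !card_ord -![w ^+ 2 *+ _]mulr_natl natrM => e2.
have -> : S = (n%:R ^+ 2 - n%:R) / 2 * w ^+ 2.
  by rewrite -[S](@mulfK _ 2) ?pnatr_eq0 // mulr_natr mulr2n; lra.
have -> : \sum_(m | upper m) (v m.1 + u m.2) ^+ 2 = \sum_(m | upper m) (u m.2 + v m.1) ^+ 2.
  by apply: eq_bigr => m _; rewrite addrC.
by rewrite addrK.
Qed.

End SumIdentities.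

Lemma loglik_upper (R : realType) n (al be : 'I_n -> R) (rh : R) (a : net n) :
  loglik al be rh a = \sum_(m | upper m) ln (pdyad al be rh m (a m) (a (mirror m))).
Proof. by rewrite /loglik pair_big_dep /=; apply: eq_big => -[i j]. Qed.

Lemma mulr_le_young (R : realType) (B s x y : R) : 0 < B -> 0 < s -> `|x| <= 2 * B ->
  x * y <= B * s + B / s * y ^+ 2.
Proof.
move=> B0 s0 hx; apply: le_trans (_ : _ <= 2 * B * `|y|) _.
  by rewrite (le_trans (ler_norm _)) // normrM ler_wpM2r.
rewrite -subr_ge0 -[y ^+ 2]real_normK ?num_real //.
have -> : B * s + B / s * `|y| ^+ 2 - 2 * B * `|y| = B / s * (`|y| - s) ^+ 2.
  by field; rewrite gt_eqF.
by rewrite mulr_ge0 ?sqr_ge0 // divr_ge0 ?ltW.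
Qed.

Section MaximumLikelihood.
Variables (R : realType) (B : R) (n : nat) (al be al' be' : 'I_n -> R) (rh rh' : R).
Hypotheses (B0 : 0 < B)
  (hal : forall i, `|al i| <= B) (hbe : forall i, `|be i| <= B) (hrh : `|rh| <= B)
  (hal' : forall i, `|al' i| <= B) (hbe' : forall i, `|be' i| <= B) (hrh' : `|rh'| <= B).

Definition du i := al' i - al i.
Definition dv i := be' i - be i.
Definition dw := rh' - rh.

Definition llr_pair (m : 'I_n * 'I_n) :=
  llr (al m.1) (be m.1) (al m.2) (be m.2) rh (al' m.1) (be' m.1) (al' m.2) (be' m.2) rh'.

Lemma normB_le2 (x y : R) : `|x| <= B -> `|y| <= B -> `|y - x| <= 2 * B.
Proof. by move=> hx hy; rewrite (le_trans (ler_normB _ _)) //; lra. Qed.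

Lemma sum_llr_pair (a : net n) : \sum_(m | upper m) llr_pair m (a m) (a (mirror m)) =
  loglik al' be' rh' a - loglik al be rh a.
Proof. by rewrite !loglik_upper -sumrB. Qed.

Lemma sum_llr_pair_centered (a : net n) :
  \sum_(m | upper m) (llr_pair m (a m) (a (mirror m)) - mean al be rh m (llr_pair m)) =
  \sum_i du i * node_dev al be rh (fst_bit R) (snd_bit R) a i
  + \sum_i dv i * node_dev al be rh (snd_bit R) (fst_bit R) a i
  + dw * recip_dev al be rh a.
Proof.
rewrite /node_dev /recip_dev !sum_node_regroup mulr_sumr -!big_split /=.
apply: eq_bigr => m _; rewrite [LHS]llr_centered.
rewrite /centered /llr_U /llr_V /llr_W /du /dv /dw /mean /fst_bit /snd_bit /both_bits.
by ring.
Qed.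

Lemma mean_llr_pair_le m : mean al be rh m (llr_pair m) <=
  - (g_min B ^+ 2 / 32) * ((du m.1 + dv m.2) ^+ 2 + (dv m.1 + du m.2) ^+ 2 + dw ^+ 2).
Proof. by apply: dyad_mean_llr_le (g_min_gt0 B) _ _ => x y; apply: g_ge_min. Qed.

Lemma sum_mul_le_young (x y : 'I_n -> R) (s : R) : 0 < s ->
  (forall i, `|x i| <= 2 * B) ->
  \sum_i x i * y i <= n%:R * (B * s) + B / s * \sum_i y i ^+ 2.
Proof.
move=> s0 hx; apply: le_trans (_ : _ <= \sum_i (B * s + B / s * y i ^+ 2)) _.
  by apply: ler_sum => i _; apply: mulr_le_young.
by rewrite big_split /= sumr_const card_ord mulr_natl mulr_sumr.
Qed.

Lemma mle_quadratic_bound (a : net n) (s : R) :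
  loglik al be rh a <= loglik al' be' rh' a -> 0 < s ->
  g_min B ^+ 2 / 32 * \sum_(m | upper m)
      ((du m.1 + dv m.2) ^+ 2 + (dv m.1 + du m.2) ^+ 2 + dw ^+ 2)
  <= B * (2 * n%:R + 1) * s + B / s * dev_sqnorm al be rh a.
Proof.
move=> mle s0.
have llr_ge0 : 0 <= \sum_(m | upper m) llr_pair m (a m) (a (mirror m)).
  by rewrite sum_llr_pair subr_ge0.
have mean_le : \sum_(m | upper m) mean al be rh m (llr_pair m) <=
    - (g_min B ^+ 2 / 32 * \sum_(m | upper m)
      ((du m.1 + dv m.2) ^+ 2 + (dv m.1 + du m.2) ^+ 2 + dw ^+ 2)).
  by rewrite mulr_sumr -sumrN; apply: ler_sum => m _; rewrite -mulNr mean_llr_pair_le.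
have := sum_llr_pair_centered a; rewrite sumrB => dev.
have := @sum_mul_le_young du (node_dev al be rh (fst_bit R) (snd_bit R) a) s s0
  (fun i => normB_le2 (hal i) (hal' i)).
have := @sum_mul_le_young dv (node_dev al be rh (snd_bit R) (fst_bit R) a) s s0
  (fun i => normB_le2 (hbe i) (hbe' i)).
have := @mulr_le_young R B s dw (recip_dev al be rh a) B0 s0 (normB_le2 hrh hrh').
rewrite /dev_sqnorm; lra.
Qed.

Lemma sum_diag_sqr_le : \sum_i (du i + dv i) ^+ 2 <= n%:R * (16 * B ^+ 2).
Proof.
apply: le_trans (_ : _ <= \sum_(i < n) 16 * B ^+ 2) _; last first.
  by rewrite sumr_const card_ord [n%:R * _]mulr_natl.
apply: ler_sum => i _.
have := normB_le2 (hal i) (hal' i); have := normB_le2 (hbe i) (hbe' i).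
rewrite /du /dv => /ler_normlP[? ?] /ler_normlP[? ?]; nra.
Qed.

Definition mle_const (K : R) : R := B * (3 + K) / (g_min B ^+ 2 / 32) + 16 * B ^+ 2.

Lemma mle_param_bound (a : net n) (K : R) : (2 <= n)%N -> 0 <= K ->
  loglik al be rh a <= loglik al' be' rh' a -> dev_sqnorm al be rh a <= K * n%:R ^+ 2 ->
  n%:R * (\sum_i (du i - avg du) ^+ 2 + \sum_i (dv i - avg dv) ^+ 2)
  + n%:R ^+ 2 * (avg du + avg dv) ^+ 2 + n%:R ^+ 2 / 4 * dw ^+ 2
  <= mle_const K * n%:R * Num.sqrt n%:R.
Proof.
move=> n2 K0 mle hW.
have n0 : (0 < n)%N by apply: leq_trans n2.
set s := Num.sqrt n%:R; have s0 : 0 < s by rewrite sqrtr_gt0 ltr0n.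
have ss : s ^+ 2 = n%:R by rewrite sqr_sqrtr ?ler0n.
have := mle_quadratic_bound mle s0.
rewrite sum_upper_pair_sqr sum_sqr_add //.
have diag := sum_diag_sqr_le.
have s1 : 1 <= s by rewrite -sqrtr1 ler_sqrt // ler1n (leq_trans _ n2).
have N2 : 2 <= n%:R :> R by rewrite ler_nat.
rewrite /mle_const; set k := g_min B ^+ 2 / 32.
have k0 : 0 < k by rewrite divr_gt0 ?exprn_gt0 ?g_min_gt0.
have W_le : B / s * dev_sqnorm al be rh a <= B * K * n%:R * s.
  apply: le_trans (_ : _ <= B / s * (K * n%:R ^+ 2)) _; first by rewrite ler_pM2l ?divr_gt0.
  rewrite le_eqVlt (_ : _ / s * _ = B * K * n%:R * s) ?eqxx // -ss.
  by field; rewrite gt_eqF.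
have lin_le : B * (2 * n%:R + 1) * s <= 3 * B * n%:R * s.
  rewrite -subr_ge0 (_ : _ - _ = B * s * (n%:R - 1)); last by ring.
  by rewrite !mulr_ge0 ?ltW //; lra.
have diag_le : k * \sum_i (du i + dv i) ^+ 2 <= k * (16 * B ^+ 2 * n%:R * s).
  rewrite ler_pM2l //; apply: le_trans diag _; rewrite mulrC -[leLHS]mulr1 ler_pM2l //.
  by rewrite !mulr_gt0 ?exprn_gt0 // ltr0n.
have dw_le : k * (n%:R ^+ 2 / 4 * dw ^+ 2) <= k * ((n%:R ^+ 2 - n%:R) / 2 * dw ^+ 2).
  by rewrite ler_pM2l // ler_wpM2r ?sqr_ge0 //; nra.
have -> : (B * (3 + K) / k + 16 * B ^+ 2) * n%:R * s =
    k^-1 * (B * (3 + K) * n%:R * s + k * (16 * B ^+ 2 * n%:R * s)).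
  by field; rewrite gt_eqF.
move=> hq; rewrite -(ler_pM2l k0) mulVKf ?gt_eqF //; lra.
Qed.

End MaximumLikelihood.

Lemma bounds_of_weighted_sum (R : realType) (N s C X Y Z : R) :
  0 < s -> s ^+ 2 = N -> 0 <= X -> 0 <= Y -> 0 <= Z ->
  N * X + N ^+ 2 * Y + N ^+ 2 / 4 * Z <= C * N * s ->
  [/\ Z <= 4 * C / s, Y <= C / s & X <= C * s].
Proof.
move=> s0 <- X0 Y0 Z0 h.
have sX : 0 <= s ^+ 2 * X := mulr_ge0 (sqr_ge0 _) X0.
have sY : 0 <= (s ^+ 2) ^+ 2 * Y := mulr_ge0 (sqr_ge0 _) Y0.
have sZ : 0 <= (s ^+ 2) ^+ 2 / 4 * Z := mulr_ge0 (divr_ge0 (sqr_ge0 _) (ler0n _ 4)) Z0.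
have s3 : 0 < s ^+ 3 by rewrite exprn_gt0.
split.
- rewrite ler_pdivlMr // -(ler_pM2l (_ : 0 < s ^+ 3 / 4)) ?divr_gt0 //; lra.
- rewrite ler_pdivlMr // -(ler_pM2l s3); lra.
- by rewrite -(ler_pM2l (_ : 0 < s ^+ 2)) ?exprn_gt0 //; lra.
Qed.

Lemma markov_sum (R : realType) (T : finType) (P X : T -> R) (t : R) :
  0 < t -> (forall a, 0 <= P a) -> (forall a, 0 <= X a) ->
  \sum_(a | t < X a) P a <= (\sum_a P a * X a) / t.
Proof.
move=> t0 P0 X0; rewrite ler_pdivlMr // mulr_suml.
apply: le_trans (_ : _ <= \sum_(a | t < X a) P a * X a) _.
  by apply: ler_sum => a /ltW tX; rewrite ler_wpM2l.
by rewrite [leRHS](bigID (fun a => t < X a)) /= lerDl sumr_ge0 // => a _; rewrite mulr_ge0.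
Qed.

Lemma bigOp_of_mean_bound (R : realType) (Pn : forall n, net n -> R)
    (X Y : forall n, net n -> R) (r q : nat -> R) (A : R) (N0 : nat) :
  (forall n a, 0 <= Pn n a) -> (forall n a, 0 <= Y n a) ->
  (forall n, (N0 <= n)%N -> 0 < q n) ->
  (forall n, \sum_a Pn n a * Y n a <= A * q n) ->
  (forall K, 0 < K -> exists M, forall n a, (N0 <= n)%N ->
     Y n a <= K * q n -> `|X n a| <= M * r n) ->
  bigOp Pn X r.
Proof.
move=> P0 Y0 q0 EY tail eps eps0.
set K := (`|A| + 1) / eps.
have K0 : 0 < K by rewrite divr_gt0 // ltr_wpDl.
have [M hM] := tail K K0; exists M, N0 => n n0.
have Kq0 : 0 < K * q n by rewrite mulr_gt0 ?q0.
apply: le_lt_trans (_ : _ <= \sum_(a | K * q n < Y n a) Pn n a) _.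
  rewrite [leRHS]big_mkcond [leLHS]big_mkcond ler_sum // => a _.
  case: ifP => [Xa|_]; last by case: ifP => // _; apply: P0.
  have [//|YK] := ltrP (K * q n) (Y n a).
  by move: Xa; rewrite ltNge hM.
apply: le_lt_trans (markov_sum _ _ _) _ => //.
rewrite ltr_pdivrMr // (le_lt_trans (EY n)) // mulrA ltr_pM2r ?q0 //.
by rewrite /K mulrCA divff ?gt_eqF // mulr1 (le_lt_trans (ler_norm A)) // ltrDl.
Qed.

Lemma mle_const_ge0 (R : realType) (B K : R) : 0 < B -> 0 <= K -> 0 <= mle_const B K.
Proof.
move=> B0 K0; have k0 : 0 < g_min B ^+ 2 / 32 by rewrite divr_gt0 ?exprn_gt0 ?g_min_gt0.
rewrite /mle_const addr_ge0 //; last by rewrite mulr_ge0 ?sqr_ge0.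
by apply: divr_ge0 (ltW k0); apply: mulr_ge0 (ltW B0) _; lra.
Qed.

Lemma mle_error_bounds (R : realType) (B K : R) n (al be : 'I_n -> R) (rh : R)
    (a : net n) (th : param R n) :
  0 < B -> 0 < K -> (2 <= n)%N -> in_param_space B al be rh -> is_mle B a th ->
  dev_sqnorm al be rh a <= K * n%:R ^+ 2 ->
  let C := 4 * mle_const B K in let s := Num.sqrt (n%:R : R) in
  [/\ dw rh th.2 ^+ 2 <= C / s, (avg (du al th.1.1) + avg (dv be th.1.2)) ^+ 2 <= C / s &
      \sum_i (du al th.1.1 i - avg (du al th.1.1)) ^+ 2
      + \sum_i (dv be th.1.2 i - avg (dv be th.1.2)) ^+ 2 <= C * s].
Proof.
move=> B0 K0 n2 htrue [hest mle] hW C s.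
have [ha [hb [hr _]]] := htrue; have [ha' [hb' [hr' _]]] := hest.
have C4 : mle_const B K <= C by rewrite ler_peMl ?mle_const_ge0 ?ltW //; lra.
have s0 : 0 < s by rewrite sqrtr_gt0 ltr0n (leq_trans _ n2).
have ss : s ^+ 2 = n%:R by rewrite sqr_sqrtr ?ler0n.
have X0 : 0 <= \sum_i (du al th.1.1 i - avg (du al th.1.1)) ^+ 2
             + \sum_i (dv be th.1.2 i - avg (dv be th.1.2)) ^+ 2.
  by apply: addr_ge0; apply: sumr_ge0 => i _; apply: sqr_ge0.
have [h1 h2 h3] := bounds_of_weighted_sum s0 ss X0 (sqr_ge0 _) (sqr_ge0 _)
  (mle_param_bound B0 ha hb hr ha' hb' hr' n2 (ltW K0) (mle _ _ _ htrue) hW).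
split=> //; [apply: le_trans h2 _ | apply: le_trans h3 _].
  by rewrite ler_pM2r ?invr_gt0.
by rewrite ler_pM2r.
Qed.

Lemma ler_log_rate (R : realType) n (X C t : R) : (2 <= n)%N ->
  0 <= X -> 0 <= C -> 0 <= t -> X <= C * t ->
  `|X| <= C / ln 2 ^+ 2 * (ln n%:R ^+ 2 * t).
Proof.
move=> n2 X0 C0 t0 hX; rewrite ger0_norm // (le_trans hX) // mulrA ler_wpM2r //.
have ln2 : 0 < ln 2 :> R by rewrite ln_gt0 // ltr1n.
have l2 : ln 2 <= ln n%:R :> R by rewrite ler_ln ?posrE ?ler_nat ?ltr0n // (leq_trans _ n2).
rewrite -mulrA ler_peMr // ler_pdivlMl ?exprn_gt0 // mulr1.
nra.
Qed.

Unset Implicit Arguments.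
Set Strict Implicit.

Theorem theorem1 (R : realType) (B : R) (hB : 0 < B)
  (alpha beta : forall n : nat, 'I_n -> R) (rho : R)
  (htrue : forall n : nat, in_param_space B (alpha n) (beta n) rho)
  (est : forall n : nat, net n -> param R n)
  (hmle : forall (n : nat) (a : net n), is_mle B a (est n a)) :
  let P := fun n (a : net n) => netP (alpha n) (beta n) rho a in
  let rate := fun n : nat => (ln (n%:R : R)) ^+ 2 in
  let dalpha := fun n (a : net n) =>
    n%:R^-1 * \sum_(i : 'I_n) ((est n a).1.1 i - alpha n i) in
  let dbeta := fun n (a : net n) =>
    n%:R^-1 * \sum_(i : 'I_n) ((est n a).1.2 i - beta n i) in
  [/\ bigOp P (fun n a => ((est n a).2 - rho) ^+ 2)
             (fun n => rate n / Num.sqrt (n%:R)),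
      bigOp P (fun n a => (dalpha n a + dbeta n a) ^+ 2)
             (fun n => rate n / Num.sqrt (n%:R)) &
      bigOp P (fun n a =>
               \sum_(i : 'I_n) ((est n a).1.1 i - alpha n i - dalpha n a) ^+ 2
             + \sum_(i : 'I_n) ((est n a).1.2 i - beta n i - dbeta n a) ^+ 2)
             (fun n => Num.sqrt (n%:R) * rate n)].
Proof.
move=> P rate dalpha dbeta.
have P0 n a : 0 <= P n a := netP_ge0 _ _ _ a.
have W0 n a : 0 <= dev_sqnorm (alpha n) (beta n) rho a := dev_sqnorm_ge0 _ _ _ a.
have q0 n : (2 <= n)%N -> 0 < n%:R ^+ 2 :> R.
  by move=> n2; rewrite exprn_gt0 // ltr0n (leq_trans _ n2).
have EW n := expect_dev_sqnorm (alpha n) (beta n) rho.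
have C0 K : 0 < K -> 0 <= 4 * mle_const B K.
  by move=> K0; rewrite mulr_ge0 ?mle_const_ge0 ?ltW.
have sqr_sum_ge0 n (u v : 'I_n -> R) : 0 <= \sum_i u i ^+ 2 + \sum_i v i ^+ 2.
  by apply: addr_ge0; apply: sumr_ge0 => i _; apply: sqr_ge0.
split; apply: (bigOp_of_mean_bound P0 W0 q0 EW) => K K0;
  exists (4 * mle_const B K / ln 2 ^+ 2) => n a n2 hW;
  have [h1 h2 h3] := mle_error_bounds hB K0 n2 (htrue n) (hmle n a) hW.
- by apply: ler_log_rate; rewrite ?sqr_ge0 ?C0 ?invr_ge0 ?sqrtr_ge0.
- by apply: ler_log_rate; rewrite ?sqr_ge0 ?C0 ?invr_ge0 ?sqrtr_ge0.
- by rewrite [_ * rate n]mulrC; apply: ler_log_rate; rewrite ?sqr_sum_ge0 ?C0 ?sqrtr_ge0.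
Qed.
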